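(* Let $G=(V,E)$ be a temporal graph whose edges are listed in a fixed chronological order $e_1,\dots,e_m$ (nondecreasing timestamps), let $\mathcal{P}=(P_1,\dots,P_R)$ be a partition of $V$, fix a level $h$ and positive parameters $\lambda_{ijh}>0$ ($1\le i\le j\le R$). For edges $s,e$ define $y(s,e;h)=\sum_{1\le i\le j\le R}\big(\mathrm{cnt}(P_i,P_j,(t(s),t(e)])\log\lambda_{ijh}-|P_i\times P_j|\,\lambda_{ijh}(t(e)-t(s))\big)$ if $s$ does not come after $e$ in the order, and $y(s,e;h)=-\infty$ otherwise. Let $o:E\to\mathbb{R}\cup\{-\infty\}$ be arbitrary and set $x(s,e)=y(s,e;h)+o(s)$. Then $x$ is totally monotone: for all indices $i_1<i_2$ and $j_1<j_2$, if $x(e_{i_2},e_{j_1})>x(e_{i_1},e_{j_1})$ then $x(e_{i_2},e_{j_2})\ge x(e_{i_1},e_{j_2})$.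
   Context: A temporal graph $G=(V,E)$ consists of a finite node set $V$ and a finite multiset $E$ of undirected edges $(u,v,t)$, $u\ne v$, with timestamp $t\in\mathbb{R}$; $t(e)$ denotes the timestamp of edge $e$. For a time interval $T$ and $U,W\subseteq V$, $\mathrm{cnt}(U,W,T)$ is the number of edges with one endpoint in $U$, the other in $W$ (counting each unordered node pair once, endpoints distinct) and timestamp in $T$; $|U\times W|$ is the number of unordered pairs $\{u,w\}$ with $u\in U$, $w\in W$, $u\ne w$. Thus $y(s,e;h)$ is the Poisson log-likelihood of the segment $(t(s),t(e)]$ under the level-$h$ parameters. In the paper, $o(s)$ plays the role of the optimal log-likelihood of a $(k-1)$-segmentation covering edges up to $s$. *)

From HB Require Import structures.
From mathcomp Require Import all_boot all_order all_algebra.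
From mathcomp Require Import all_classical all_reals all_analysis.
Set Implicit Arguments. Unset Strict Implicit. Unset Printing Implicit Defensive.
Import Order.TTheory GRing.Theory Num.Theory.
Local Open Scope ring_scope.

(* A temporal graph on the finite node type V with m edges, listed in a fixed
   chronological order e_0, ..., e_(m-1): edge k is (eu k, ev k, et k).
   Edges are identified with their index, so parallel edges (multiset) are fine. *)

Definition is_partition (V : finType) (R : nat) (P : 'I_R -> {set V}) : Prop :=
  [/\ forall i, P i != finset.set0,
      forall i j, i != j -> [disjoint P i & P j]
    & forall v : V, exists i, v \in P i].

Definition cnt (V : finType) (Rt : realType) (m : nat)
    (eu ev : 'I_m -> V) (et : 'I_m -> Rt) (U W : {set V}) (a b : Rt) : nat :=
  #|[set k : 'I_m | (a < et k <= b) &&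
       ((eu k \in U) && (ev k \in W) || (eu k \in W) && (ev k \in U))]|.

Definition npairs (V : finType) (U W : {set V}) : nat :=
  #|[set A : {set V} | [exists u in U, exists w in W, (u != w) && (A == [set u; w])]]|.

Local Open Scope ereal_scope.

Definition yseg (V : finType) (Rt : realType) (m : nat)
    (eu ev : 'I_m -> V) (et : 'I_m -> Rt) (R : nat) (P : 'I_R -> {set V})
    (lam : nat -> 'I_R -> 'I_R -> Rt) (h : nat) (s e : 'I_m) : \bar Rt :=
  if (s <= e)%N then
    ((\sum_(i < R) \sum_(j < R | (i <= j)%N)
        ((cnt eu ev et (P i) (P j) (et s) (et e))%:R * ln (lam h i j)
         - (npairs (P i) (P j))%:R * lam h i j * (et e - et s)))%R)%:E
  else -oo.

(* Cumulative counts telescope: with G(k) the Poisson log-likelihood of all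
   edges up to time t(e_k), y(s,e) = G(e) - G(s) whenever s comes no later than e.
   Hence x(s,e) = G(e) + (o(s) - G(s)) on the region s <= e, and -oo elsewhere.
   If x(e_i2, e_j1) beats x(e_i1, e_j1), it is finite, so i1 < i2 <= j1 < j2 and
   the comparison reduces to o(i2) - G(i2) > o(i1) - G(i1), which does not depend
   on the column. *)
From HB Require Import structures.
From mathcomp Require Import all_boot all_order all_algebra.
From mathcomp Require Import all_classical all_reals all_analysis.
From mathcomp Require Import ring.
Import Order.TTheory GRing.Theory Num.Theory.
Set Implicit Arguments. Unset Strict Implicit.
Local Open Scope ring_scope.

Lemma card_window_split (T : finType) (Rt : realType) (f : T -> Rt) (p : pred T)
    (a b : Rt) : a <= b ->
  addn #|[set k | (a < f k <= b) && p k]| #|[set k | (f k <= a) && p k]|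
   = #|[set k | (f k <= b) && p k]|.
Proof.
move=> ab.
rewrite -(cardsID [set k | (f k <= a) && p k] [set k | (f k <= b) && p k]) addnC.
congr (_ + _)%N; apply: eq_card => k; rewrite !inE;
  by case: (lerP (f k) a) => hk; case: (p k); rewrite ?andbT ?andbF //= (le_trans hk ab).
Qed.

Definition cnt_upto (V : finType) (Rt : realType) (m : nat)
    (eu ev : 'I_m -> V) (et : 'I_m -> Rt) (U W : {set V}) (b : Rt) : nat :=
  #|[set k : 'I_m | (et k <= b) &&
       ((eu k \in U) && (ev k \in W) || (eu k \in W) && (ev k \in U))]|.

Lemma cnt_upto_diff (V : finType) (Rt : realType) (m : nat)
    (eu ev : 'I_m -> V) (et : 'I_m -> Rt) (U W : {set V}) (a b : Rt) : a <= b ->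
  (cnt eu ev et U W a b)%:R
   = (cnt_upto eu ev et U W b)%:R - (cnt_upto eu ev et U W a)%:R :> Rt.
Proof.
move=> ab; apply/eqP; rewrite eq_sym subr_eq -natrD.
by rewrite /cnt /cnt_upto (card_window_split et _ ab).
Qed.

Definition cumulative_loglik (V : finType) (Rt : realType) (m : nat)
    (eu ev : 'I_m -> V) (et : 'I_m -> Rt) (R : nat) (P : 'I_R -> {set V})
    (lam : nat -> 'I_R -> 'I_R -> Rt) (h : nat) (k : 'I_m) : Rt :=
  \sum_(i < R) \sum_(j < R | (i <= j)%N)
        ((cnt_upto eu ev et (P i) (P j) (et k))%:R * ln (lam h i j)
         - (npairs (P i) (P j))%:R * lam h i j * et k).

Lemma ysegE (V : finType) (Rt : realType) (m : nat)
    (eu ev : 'I_m -> V) (et : 'I_m -> Rt)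
    (Hchrono : forall k l : 'I_m, (k <= l)%N -> et k <= et l)
    (R : nat) (P : 'I_R -> {set V}) (lam : nat -> 'I_R -> 'I_R -> Rt) (h : nat)
    (s e : 'I_m) :
  let G := cumulative_loglik eu ev et P lam h in
  yseg eu ev et P lam h s e = if (s <= e)%N then (G e - G s)%:E else -oo%E.
Proof.
rewrite /yseg; case: ifP => // se; congr _%:E.
rewrite -sumrB; apply: eq_bigr => i _; rewrite -sumrB; apply: eq_bigr => j _.
by rewrite cnt_upto_diff ?Hchrono //; ring.
Qed.

Section TotalMonotonicity.
Local Open Scope ereal_scope.

Lemma telescoping_totally_monotone (R : realType) (m : nat)
    (G : 'I_m -> R) (o : 'I_m -> \bar R) (Ho : forall k, o k != +oo)
    (i1 i2 j1 j2 : 'I_m) : (i1 <= i2)%N -> (j1 <= j2)%N ->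
  let x (s e : 'I_m) := (if (s <= e)%N then (G e - G s)%:E else -oo) + o s in
  x i1 j1 < x i2 j1 -> x i1 j2 <= x i2 j2.
Proof.
move=> hi hj /=.
case: (leqP i2 j1) => h2; last by rewrite addNye ltNge leNye.
have h11 : (i1 <= j1)%N := leq_trans hi h2.
have h22 : (i2 <= j2)%N := leq_trans h2 hj.
rewrite h11 h22 (leq_trans h11 hj).
rewrite !EFinB -!addeA lteD2lE // leeD2lE //; exact: ltW.
Qed.

End TotalMonotonicity.

Theorem proposition5 (V : finType) (Rt : realType) (m : nat)
    (eu ev : 'I_m -> V) (et : 'I_m -> Rt)
    (Hloop : forall k, eu k != ev k)
    (Hchrono : forall k l : 'I_m, (k <= l)%N -> et k <= et l)
    (R : nat) (P : 'I_R -> {set V}) (HP : is_partition P)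
    (h : nat) (lam : nat -> 'I_R -> 'I_R -> Rt)
    (Hlam : forall i j : 'I_R, (i <= j)%N -> 0 < lam h i j)
    (o : 'I_m -> \bar Rt) (Ho : forall k, o k != +oo%E) :
  let x := fun s e : 'I_m => (yseg eu ev et P lam h s e + o s)%E in
  forall i1 i2 j1 j2 : 'I_m, (i1 < i2)%N -> (j1 < j2)%N ->
    (x i1 j1 < x i2 j1)%E -> (x i1 j2 <= x i2 j2)%E.
Proof.
move=> x i1 i2 j1 j2 hi hj; rewrite /x !(ysegE _ _ Hchrono).
exact: (telescoping_totally_monotone (G := cumulative_loglik eu ev et P lam h) Ho
          (ltnW hi) (ltnW hj)).
Qed.
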